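(* Let $E$ be a uniformly smooth real Banach space, $D\subseteq E$ a nonempty closed convex subset, $T:D\to D$ a nonexpansive mapping with $F(T)\neq\emptyset$, $f\in\Pi_D$ and $x_0\in D$. Let $\alpha_n\in[0,1]$ with $\alpha_n\to0$ and $\sum_{n=0}^\infty\alpha_n=\infty$, and define $x_{n+1}=\alpha_nf(x_n)+(1-\alpha_n)Tx_n$ for $n\ge0$. Assume $\|Tx_n-x_n\|\to0$. Then $\{x_n\}$ converges strongly to $Q(f)$.
   Context: $F(T)=\{x\in D: Tx=x\}$ denotes the fixed point set of $T$. $\Pi_D$ denotes the set of contractions on $D$: maps $f:D\to D$ for which there is $\alpha\in(0,1)$ with $\|f(x)-f(y)\|\le\alpha\|x-y\|$ for all $x,y\in D$. For $f\in\Pi_D$ and $t\in(0,1)$, let $x_t\in D$ be the unique solution of $x_t=tf(x_t)+(1-t)Tx_t$. When $E$ is uniformly smooth and $F(T)\neq\emptyset$, the strong limit $\lim_{t\to0^+}x_t$ exists and lies in $F(T)$ (a known result of Xu); the map $Q:\Pi_D\to F(T)$ is defined by $Q(f):=\lim_{t\to0^+}x_t$. *)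

From Stdlib Require Import Reals Lra.
Open Scope R_scope.
Set Implicit Arguments.

Record NormedSpace := {
  carrier :> Type;
  vzero : carrier;
  vadd : carrier -> carrier -> carrier;
  vopp : carrier -> carrier;
  vscal : R -> carrier -> carrier;
  vnorm : carrier -> R;
  vadd_assoc : forall x y z, vadd x (vadd y z) = vadd (vadd x y) z;
  vadd_comm : forall x y, vadd x y = vadd y x;
  vadd_zero : forall x, vadd x vzero = x;
  vadd_opp : forall x, vadd x (vopp x) = vzero;
  vscal_one : forall x, vscal 1 x = x;
  vscal_assoc : forall a b x, vscal a (vscal b x) = vscal (a * b) x;
  vscal_distr_v : forall a x y, vscal a (vadd x y) = vadd (vscal a x) (vscal a y);
  vscal_distr_s : forall a b x, vscal (a + b) x = vadd (vscal a x) (vscal b x);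
  vnorm_eq0 : forall x, vnorm x = 0 -> x = vzero;
  vnorm_scal : forall a x, vnorm (vscal a x) = Rabs a * vnorm x;
  vnorm_triangle : forall x y, vnorm (vadd x y) <= vnorm x + vnorm y
}.

Arguments vzero {_}.
Arguments vadd {_}.
Arguments vopp {_}.
Arguments vscal {_}.
Arguments vnorm {_}.

Definition vsub {E : NormedSpace} (x y : E) : E := vadd x (vopp y).
Definition vdist {E : NormedSpace} (x y : E) : R := vnorm (vsub x y).

Definition seq_conv {E : NormedSpace} (u : nat -> E) (q : E) : Prop :=
  forall eps, 0 < eps -> exists N, forall n, (N <= n)%nat -> vdist (u n) q < eps.

Definition vcauchy {E : NormedSpace} (u : nat -> E) : Prop :=
  forall eps, 0 < eps -> exists N, forall m n, (N <= m)%nat -> (N <= n)%nat ->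
    vdist (u m) (u n) < eps.

Definition vcomplete (E : NormedSpace) : Prop :=
  forall u : nat -> E, vcauchy u -> exists q, seq_conv u q.

(* Uniform smoothness: the modulus of smoothness
   rho(tau) = sup { (||x + tau y|| + ||x - tau y||)/2 - 1 : ||x|| = ||y|| = 1 }
   satisfies rho(tau)/tau -> 0 as tau -> 0+  (sup unfolded). *)
Definition uniformly_smooth (E : NormedSpace) : Prop :=
  forall eps, 0 < eps -> exists delta, 0 < delta /\
    forall tau, 0 < tau < delta -> forall x y : E, vnorm x = 1 -> vnorm y = 1 ->
      (vnorm (vadd x (vscal tau y)) + vnorm (vsub x (vscal tau y))) / 2 - 1
        <= eps * tau.

Definition vclosed_set {E : NormedSpace} (D : E -> Prop) : Prop :=
  forall (u : nat -> E) q, (forall n, D (u n)) -> seq_conv u q -> D q.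

Definition vconvex_set {E : NormedSpace} (D : E -> Prop) : Prop :=
  forall x y t, D x -> D y -> 0 <= t <= 1 ->
    D (vadd (vscal t x) (vscal (1 - t) y)).

Definition maps_into {E : NormedSpace} (D : E -> Prop) (T : E -> E) : Prop :=
  forall x, D x -> D (T x).

Definition nonexpansive_on {E : NormedSpace} (D : E -> Prop) (T : E -> E) : Prop :=
  forall x y, D x -> D y -> vdist (T x) (T y) <= vdist x y.

(* f in Pi_D : a contraction on D (D -> D) *)
Definition contraction_on {E : NormedSpace} (D : E -> Prop) (f : E -> E) : Prop :=
  maps_into D f /\
  exists a, 0 < a < 1 /\ forall x y, D x -> D y -> vdist (f x) (f y) <= a * vdist x y.

Definition fixed_point_set {E : NormedSpace} (D : E -> Prop) (T : E -> E) (x : E) : Prop :=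
  D x /\ T x = x.

Definition viscosity_net {E : NormedSpace} (D : E -> Prop) (T f : E -> E)
  (xt : R -> E) : Prop :=
  forall t, 0 < t < 1 ->
    D (xt t) /\ xt t = vadd (vscal t (f (xt t))) (vscal (1 - t) (T (xt t))).

Definition net_conv_0plus {E : NormedSpace} (xt : R -> E) (q : E) : Prop :=
  forall eps, 0 < eps -> exists delta, 0 < delta /\
    forall t, 0 < t < delta -> t < 1 -> vdist (xt t) q < eps.

(* q = Q(f): q is the strong limit as t -> 0+ of the (unique) net x_t *)
Definition is_Q {E : NormedSpace} (D : E -> Prop) (T f : E -> E) (q : E) : Prop :=
  forall xt, viscosity_net D T f xt -> net_conv_0plus xt q.

(* Write  h(s) = ||z + s w||^2.  It is convex in s, so the
   difference quotients  Q(z, w, r) = (h(r) - h(0)) / r  are monotone in r,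
   and they play the role of the (duality-map) pairing 2<w, J z>.  Uniform
   smoothness gives  h(r) + h(-r) - 2 h(0) = o(r)  uniformly on bounded sets,
   i.e. left and right quotients agree in the limit.  Using the net
   x_t = t f(x_t) + (1 - t) T x_t (built by Banach's fixed point theorem and
   converging to q = Q(f)) one shows that q is a fixed point of T and that
     limsup_n Q(x_n - q, f q - q, r) <= e   for r small,
   the analogue of  limsup <f q - q, J(x_n - q)> <= 0.  Convexity of h gives
   the step estimate  ||x_(n+1) - q||^2 <= (1 - (1-a) alpha_n) ||x_n - q||^2
   + alpha_n eps  eventually, and Xu's lemma on real sequences concludes. *)

From Stdlib Require Import Reals Lra Lia List ClassicalEpsilon.
Import ListNotations.
Open Scope R_scope.

Arguments vadd_assoc {_}. Arguments vadd_comm {_}. Arguments vadd_zero {_}.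
Arguments vadd_opp {_}. Arguments vscal_one {_}. Arguments vscal_assoc {_}.
Arguments vscal_distr_v {_}. Arguments vscal_distr_s {_}. Arguments vnorm_eq0 {_}.
Arguments vnorm_scal {_}. Arguments vnorm_triangle {_}.

Section VectorAlgebra.
Context {E : NormedSpace}.

Lemma vadd_0l (x : E) : vadd vzero x = x.
Proof. rewrite vadd_comm. apply vadd_zero. Qed.

Lemma vadd_cancel_l (a b c : E) : vadd a b = vadd a c -> b = c.
Proof.
  intro H.
  assert (H1 : vadd (vopp a) (vadd a b) = vadd (vopp a) (vadd a c)) by now rewrite H.
  rewrite !vadd_assoc, (vadd_comm (vopp a) a), vadd_opp, !vadd_0l in H1. exact H1.
Qed.

Lemma vscal_0 (x : E) : vscal 0 x = vzero.
Proof.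
  apply (vadd_cancel_l (vscal 0 x)). rewrite vadd_zero, <- vscal_distr_s.
  now rewrite Rplus_0_r.
Qed.

Lemma vscal_zero (r : R) : vscal r (@vzero E) = vzero.
Proof.
  apply (vadd_cancel_l (vscal r vzero)). rewrite vadd_zero, <- vscal_distr_v.
  now rewrite vadd_zero.
Qed.

Lemma vopp_scal (x : E) : vopp x = vscal (-1) x.
Proof.
  apply (vadd_cancel_l x). rewrite vadd_opp.
  rewrite <- (vscal_one x) at 1. rewrite <- vscal_distr_s.
  replace (1 + -1) with 0 by ring. now rewrite vscal_0.
Qed.

Lemma vadd_swap4 (a b c d : E) :
  vadd (vadd a b) (vadd c d) = vadd (vadd a c) (vadd b d).
Proof.
  rewrite <- !vadd_assoc. f_equal. rewrite !vadd_assoc. f_equal. apply vadd_comm.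
Qed.

(* A vector expression over atoms [env] denotes the linear combination of the
   atoms with coefficients [coef]; two expressions with the same coefficients
   are equal. *)
Inductive vexpr := VAtom (n : nat) | VZero | VAdd (a b : vexpr) | VOpp (a : vexpr)
  | VSub (a b : vexpr) | VScal (r : R) (a : vexpr).

Fixpoint veval (env : list E) (e : vexpr) : E :=
  match e with
  | VAtom n => nth n env vzero
  | VZero => vzero
  | VAdd a b => vadd (veval env a) (veval env b)
  | VOpp a => vopp (veval env a)
  | VSub a b => vsub (veval env a) (veval env b)
  | VScal r a => vscal r (veval env a)
  end.

Fixpoint coef (e : vexpr) (i : nat) : R :=
  match e with
  | VAtom n => if Nat.eqb n i then 1 else 0
  | VZero => 0
  | VAdd a b => coef a i + coef b i
  | VOpp a => - coef a i
  | VSub a b => coef a i - coef b i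
  | VScal r a => r * coef a i
  end.

Fixpoint lincomb (env : list E) (c : nat -> R) (k : nat) : E :=
  match env with
  | [] => vzero
  | a :: env' => vadd (vscal (c k) a) (lincomb env' c (S k))
  end.

Lemma lincomb_ext (env : list E) : forall c1 c2 k,
  (forall i, (k <= i < k + length env)%nat -> c1 i = c2 i) ->
  lincomb env c1 k = lincomb env c2 k.
Proof.
  induction env as [|a env IH]; intros c1 c2 k H; simpl; auto.
  simpl in H. rewrite (H k) by lia. f_equal. apply IH. intros; apply H; lia.
Qed.

Lemma lincomb_add (env : list E) : forall c1 c2 k,
  lincomb env (fun i => c1 i + c2 i) k = vadd (lincomb env c1 k) (lincomb env c2 k).
Proof.
  induction env as [|a env IH]; intros; simpl; [now rewrite vadd_zero|].
  rewrite IH, vscal_distr_s. apply eq_sym, vadd_swap4.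
Qed.

Lemma lincomb_scal (env : list E) : forall r c k,
  lincomb env (fun i => r * c i) k = vscal r (lincomb env c k).
Proof.
  induction env as [|a env IH]; intros; simpl; [now rewrite vscal_zero|].
  now rewrite IH, vscal_distr_v, vscal_assoc.
Qed.

Lemma lincomb_zero (env : list E) : forall k, lincomb env (fun _ => 0) k = vzero.
Proof.
  induction env as [|a env IH]; intros; simpl; auto.
  rewrite IH, vscal_0. apply vadd_zero.
Qed.

Lemma lincomb_atom (env : list E) : forall n k,
  lincomb env (fun i => if Nat.eqb (k + n) i then 1 else 0) k = nth n env vzero.
Proof.
  induction env as [|a env IH]; intros n k; simpl; [now destruct n|].
  destruct n as [|n].
  - rewrite Nat.add_0_r, Nat.eqb_refl, vscal_one.
    rewrite (lincomb_ext env _ (fun _ => 0)), lincomb_zero; [apply vadd_zero|].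
    intros i Hi. destruct (Nat.eqb_spec k i); [lia|reflexivity].
  - replace (Nat.eqb (k + S n) k) with false by (symmetry; apply Nat.eqb_neq; lia).
    rewrite vscal_0, vadd_0l, <- (IH n (S k)). apply lincomb_ext.
    intros i Hi. now replace (k + S n)%nat with (S k + n)%nat by lia.
Qed.

Lemma veval_lincomb (env : list E) (e : vexpr) :
  veval env e = lincomb env (coef e) 0.
Proof.
  induction e; simpl.
  - now rewrite <- (lincomb_atom env n 0).
  - now rewrite lincomb_zero.
  - now rewrite IHe1, IHe2, <- lincomb_add.
  - rewrite IHe, vopp_scal, <- lincomb_scal. apply lincomb_ext. intros; ring.
  - unfold vsub. rewrite IHe1, IHe2, vopp_scal, <- lincomb_scal, <- lincomb_add.
    apply lincomb_ext. intros; ring.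
  - now rewrite IHe, <- lincomb_scal.
Qed.

Lemma veval_coef_eq (env : list E) (e1 e2 : vexpr) :
  (forall i, (i < length env)%nat -> coef e1 i = coef e2 i) ->
  veval env e1 = veval env e2.
Proof.
  intro H. rewrite !veval_lincomb. apply lincomb_ext. intros; apply H; lia.
Qed.

End VectorAlgebra.

Ltac vl_find t l :=
  lazymatch l with
  | (t :: _) => constr:(O)
  | (_ :: ?l') => let n := vl_find t l' in constr:(S n)
  end.

Ltac vl_atoms t acc :=
  lazymatch t with
  | @vadd _ ?a ?b => let acc := vl_atoms a acc in vl_atoms b acc
  | @vsub _ ?a ?b => let acc := vl_atoms a acc in vl_atoms b acc
  | @vopp _ ?a => vl_atoms a acc
  | @vscal _ _ ?a => vl_atoms a acc
  | @vzero _ => acc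
  | _ => match constr:(tt) with
         | _ => let _ := vl_find t acc in acc
         | _ => constr:(t :: acc)
         end
  end.

Ltac vl_reify t env :=
  lazymatch t with
  | @vadd _ ?a ?b => let ra := vl_reify a env in let rb := vl_reify b env in constr:(VAdd ra rb)
  | @vsub _ ?a ?b => let ra := vl_reify a env in let rb := vl_reify b env in constr:(VSub ra rb)
  | @vopp _ ?a => let ra := vl_reify a env in constr:(VOpp ra)
  | @vscal _ ?c ?a => let ra := vl_reify a env in constr:(VScal c ra)
  | @vzero _ => constr:(VZero)
  | _ => let n := vl_find t env in constr:(VAtom n)
  end.

(* [vlin] proves an equation between linear combinations of vectors by
   comparing coefficients; the remaining scalar goals are tried with [ring]
   and left to the user (typically [field]) otherwise. *)
Ltac vlin :=
  match goal with
  | |- @eq ?T ?L ?R =>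
    let env0 := vl_atoms L (@nil T) in
    let env := vl_atoms R env0 in
    let eL := vl_reify L env in
    let eR := vl_reify R env in
    change (veval env eL = veval env eR); apply veval_coef_eq;
    let i := fresh "i" in let H := fresh "H" in
    intros i H; cbn [length] in H;
    repeat (first [ exfalso; lia | destruct i as [|i]; [ cbn; try ring | ] ])
  end.

Lemma div_nonneg (x y : R) : 0 <= x -> 0 < y -> 0 <= x / y.
Proof. intros. unfold Rdiv. apply Rmult_le_pos; auto. left; apply Rinv_0_lt_compat; auto. Qed.

Lemma div_le_of_le_mul (x y c : R) : 0 < y -> x <= c * y -> x / y <= c.
Proof. intros. apply (Rmult_le_reg_r y); auto. replace (x / y * y) with x by (field; lra). lra. Qed.

Lemma Un_cv_0_lt (u : nat -> R) : Un_cv u 0 ->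
  forall e, 0 < e -> exists N, forall n, (N <= n)%nat -> u n < e.
Proof.
  intros H e He. destruct (H e He) as [N HN]. exists N. intros n Hn.
  specialize (HN n Hn). unfold R_dist in HN. rewrite Rminus_0_r in HN.
  pose proof (Rle_abs (u n)). lra.
Qed.

Lemma sq_convex (a p q : R) : 0 <= a <= 1 ->
  (a * p + (1 - a) * q) ^ 2 <= a * p ^ 2 + (1 - a) * q ^ 2.
Proof.
  intros. assert (0 <= a * (1 - a) * (p - q) ^ 2) by
    (apply Rmult_le_pos; [apply Rmult_le_pos; lra | apply pow2_ge_0]).
  nra.
Qed.

Section Norms.
Context {E : NormedSpace}.

Lemma vnorm_zero : vnorm (@vzero E) = 0.
Proof. rewrite <- (vscal_0 (@vzero E)), vnorm_scal, Rabs_R0. ring. Qed.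

Lemma vnorm_opp (x : E) : vnorm (vopp x) = vnorm x.
Proof. rewrite vopp_scal, vnorm_scal, Rabs_left by lra. ring. Qed.

Lemma vnorm_ge0 (x : E) : 0 <= vnorm x.
Proof.
  pose proof (vnorm_triangle x (vopp x)) as H.
  rewrite vadd_opp, vnorm_zero, vnorm_opp in H. lra.
Qed.

Lemma vnorm_scal_pos (a : R) (x : E) : 0 <= a -> vnorm (vscal a x) = a * vnorm x.
Proof. intro. rewrite vnorm_scal, Rabs_pos_eq; auto. Qed.

Lemma vnorm_sub_le (x y : E) : vnorm (vsub x y) <= vnorm x + vnorm y.
Proof. unfold vsub. rewrite <- (vnorm_opp y). apply vnorm_triangle. Qed.

Lemma vnorm_add_dev (x y : E) : Rabs (vnorm (vadd x y) - vnorm x) <= vnorm y.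
Proof.
  apply Rabs_le. split.
  - pose proof (vnorm_sub_le (vadd x y) y) as H.
    replace (vsub (vadd x y) y) with x in H by vlin. lra.
  - pose proof (vnorm_triangle x y). lra.
Qed.

Lemma vdist_sym (x y : E) : vdist x y = vdist y x.
Proof. unfold vdist. rewrite <- vnorm_opp. f_equal. vlin. Qed.

Lemma vdist_tri (x y z : E) : vdist x z <= vdist x y + vdist y z.
Proof.
  unfold vdist. replace (vsub x z) with (vadd (vsub x y) (vsub y z)) by vlin.
  apply vnorm_triangle.
Qed.

Lemma vdist_ge0 (x y : E) : 0 <= vdist x y.
Proof. apply vnorm_ge0. Qed.

Lemma vdist_eq0 (x y : E) : vdist x y = 0 -> x = y.
Proof.
  unfold vdist. intro H. apply vnorm_eq0 in H.
  transitivity (vadd (vsub x y) y); [vlin|]. rewrite H. vlin.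
Qed.

Lemma vdist_refl (x : E) : vdist x x = 0.
Proof. unfold vdist. replace (vsub x x) with (@vzero E) by vlin. apply vnorm_zero. Qed.

Lemma vdist_convex (A B P : E) (t : R) : 0 <= t <= 1 ->
  vdist (vadd (vscal t A) (vscal (1 - t) B)) P <= t * vdist A P + (1 - t) * vdist B P.
Proof.
  intro Ht. unfold vdist.
  replace (vsub (vadd (vscal t A) (vscal (1 - t) B)) P)
    with (vadd (vscal t (vsub A P)) (vscal (1 - t) (vsub B P))) by vlin.
  eapply Rle_trans; [apply vnorm_triangle|]. rewrite !vnorm_scal_pos by lra. lra.
Qed.

End Norms.

(** * The convex function s |-> ||z + s w||^2 and its difference quotients *)

Section Quotients.
Context {E : NormedSpace}.

Definition hq (z w : E) (s : R) : R := vnorm (vadd z (vscal s w)) ^ 2.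

(* right difference quotient of [hq z w] at 0; as r -> 0+ it decreases to
   2 <w, J z> for the normalized duality map J *)
Definition Qp (z w : E) (r : R) : R := (hq z w r - hq z w 0) / r.

Lemma hq0 (z w : E) : hq z w 0 = vnorm z ^ 2.
Proof. unfold hq. do 2 f_equal. vlin. Qed.

Lemma hq_convex (z w : E) s1 s2 s3 : s1 <= s2 <= s3 ->
  (s3 - s1) * hq z w s2 <= (s3 - s2) * hq z w s1 + (s2 - s1) * hq z w s3.
Proof.
  intros Hs. destruct (Req_dec s1 s3) as [Heq|Hne].
  { subst. assert (s2 = s3) by lra. subst. lra. }
  set (a := (s3 - s2) / (s3 - s1)).
  assert (Ha : 0 <= a <= 1) by (unfold a; split; [apply div_nonneg | apply div_le_of_le_mul]; lra).
  assert (Hn : vnorm (vadd z (vscal s2 w)) <=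
    a * vnorm (vadd z (vscal s1 w)) + (1 - a) * vnorm (vadd z (vscal s3 w))).
  { replace (vadd z (vscal s2 w)) with
      (vadd (vscal a (vadd z (vscal s1 w))) (vscal (1 - a) (vadd z (vscal s3 w))))
      by (unfold a; vlin; field; lra).
    rewrite <- (vnorm_scal_pos a), <- (vnorm_scal_pos (1 - a)) by lra.
    apply vnorm_triangle. }
  pose proof (vnorm_ge0 (vadd z (vscal s2 w))).
  assert (H2 : hq z w s2 <= a * hq z w s1 + (1 - a) * hq z w s3).
  { eapply Rle_trans; [| apply sq_convex; auto]. apply pow_incr; lra. }
  assert (Ha1 : a * (s3 - s1) = s3 - s2) by (unfold a; field; lra).
  assert (Ha2 : (1 - a) * (s3 - s1) = s2 - s1) by (unfold a; field; lra).
  rewrite <- Ha1, <- Ha2. nra.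
Qed.

Lemma Qp_mono (z w : E) r1 r2 : 0 < r1 <= r2 -> Qp z w r1 <= Qp z w r2.
Proof.
  intros Hr. pose proof (hq_convex z w 0 r1 r2 ltac:(lra)) as H.
  unfold Qp. apply (Rmult_le_reg_r (r1 * r2)); [nra|].
  replace ((hq z w r1 - hq z w 0) / r1 * (r1 * r2)) with ((hq z w r1 - hq z w 0) * r2)
    by (field; lra).
  replace ((hq z w r2 - hq z w 0) / r2 * (r1 * r2)) with ((hq z w r2 - hq z w 0) * r1)
    by (field; lra).
  nra.
Qed.

Lemma left_quotient_le (z w : E) s r : 0 < s -> 0 < r ->
  (vnorm z ^ 2 - hq z w (- s)) / s <= Qp z w r.
Proof.
  intros Hs Hr. pose proof (hq_convex z w (-s) 0 r ltac:(lra)) as H.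
  unfold Qp. rewrite hq0 in *. apply (Rmult_le_reg_r (s * r)); [nra|].
  replace ((vnorm z ^ 2 - hq z w (- s)) / s * (s * r))
    with ((vnorm z ^ 2 - hq z w (- s)) * r) by (field; lra).
  replace ((hq z w r - vnorm z ^ 2) / r * (s * r))
    with ((hq z w r - vnorm z ^ 2) * s) by (field; lra).
  nra.
Qed.

Lemma Qp_opp (z w : E) r : Qp (vopp z) w r = (hq z w (- r) - vnorm z ^ 2) / r.
Proof.
  unfold Qp. rewrite !hq0, vnorm_opp. unfold hq.
  rewrite <- (vnorm_opp (vadd z (vscal (- r) w))). do 4 f_equal. vlin.
Qed.

(* ||X + al W||^2 <= ||X||^2 + al Q(X + al W, W, r): the subdifferential
   inequality replacing ||x + y||^2 <= ||x||^2 + 2 <y, J(x + y)> *)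
Lemma sq_norm_step (X W : E) (al r : R) : 0 <= al -> 0 < r ->
  vnorm (vadd X (vscal al W)) ^ 2 <= vnorm X ^ 2 + al * Qp (vadd X (vscal al W)) W r.
Proof.
  intros Ha Hr. set (z := vadd X (vscal al W)).
  pose proof (hq_convex z W (-al) 0 r ltac:(lra)) as H.
  assert (Hm : hq z W (- al) = vnorm X ^ 2) by (unfold hq, z; do 2 f_equal; vlin).
  rewrite Hm, hq0 in H. unfold Qp. rewrite hq0.
  assert (al * ((hq z W r - vnorm z ^ 2) / r) * r = al * (hq z W r - vnorm z ^ 2))
    by (field; lra).
  nra.
Qed.

Lemma Qp_add_dir (z v y : E) r : 0 < r ->
  Qp z (vadd v y) r <= Qp z v (2 * r) + Qp z y (2 * r).
Proof.
  intros Hr. unfold Qp. rewrite !hq0. unfold hq.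
  set (A := vnorm (vadd z (vscal (2 * r) v))). set (B := vnorm (vadd z (vscal (2 * r) y))).
  assert (Hn : vnorm (vadd z (vscal r (vadd v y))) <= 1/2 * A + (1 - 1/2) * B).
  { replace (vadd z (vscal r (vadd v y))) with
      (vadd (vscal (1/2) (vadd z (vscal (2 * r) v))) (vscal (1 - 1/2) (vadd z (vscal (2 * r) y))))
      by (vlin; field).
    unfold A, B. rewrite <- (vnorm_scal_pos (1/2)), <- (vnorm_scal_pos (1 - 1/2)) by lra.
    apply vnorm_triangle. }
  pose proof (vnorm_ge0 (vadd z (vscal r (vadd v y)))).
  assert (H2 : vnorm (vadd z (vscal r (vadd v y))) ^ 2 <= 1/2 * A ^ 2 + (1 - 1/2) * B ^ 2).
  { eapply Rle_trans; [| apply sq_convex; lra]. apply pow_incr; lra. }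
  apply (Rmult_le_reg_r (2 * r)); [lra|].
  replace ((vnorm (vadd z (vscal r (vadd v y))) ^ 2 - vnorm z ^ 2) / r * (2 * r))
    with (2 * (vnorm (vadd z (vscal r (vadd v y))) ^ 2 - vnorm z ^ 2)) by (field; lra).
  replace (((A ^ 2 - vnorm z ^ 2) / (2 * r) + (B ^ 2 - vnorm z ^ 2) / (2 * r)) * (2 * r))
    with (A ^ 2 - vnorm z ^ 2 + (B ^ 2 - vnorm z ^ 2)) by (field; lra).
  lra.
Qed.

(* the analogue of 2 <y, J z> <= 2 ||z|| ||y|| *)
Lemma Qp_le_norms (z y : E) r : 0 < r ->
  Qp z y r <= 2 * vnorm z * vnorm y + r * vnorm y ^ 2.
Proof.
  intros Hr. unfold Qp. rewrite hq0. unfold hq.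
  assert (Hn : vnorm (vadd z (vscal r y)) <= vnorm z + r * vnorm y).
  { rewrite <- (vnorm_scal_pos r) by lra. apply vnorm_triangle. }
  pose proof (vnorm_ge0 (vadd z (vscal r y))). pose proof (vnorm_ge0 z).
  pose proof (vnorm_ge0 y).
  apply (Rmult_le_reg_r r); [lra|].
  replace ((vnorm (vadd z (vscal r y)) ^ 2 - vnorm z ^ 2) / r * r)
    with (vnorm (vadd z (vscal r y)) ^ 2 - vnorm z ^ 2) by (field; lra).
  assert (vnorm (vadd z (vscal r y)) ^ 2 <= (vnorm z + r * vnorm y) ^ 2)
    by (apply pow_incr; lra).
  nra.
Qed.

Lemma sq_le_shift (A1 A2 d L : R) : 0 <= A1 -> 0 <= A2 -> A1 <= L -> A2 <= L -> 0 <= d ->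
  A1 <= A2 + d -> A1 ^ 2 <= A2 ^ 2 + d * (2 * L).
Proof.
  intros. destruct (Rle_lt_dec A1 A2).
  - assert (A1 ^ 2 <= A2 ^ 2) by (apply pow_incr; lra). nra.
  - assert ((A1 - A2) * (A1 + A2) <= d * (A1 + A2)) by (apply Rmult_le_compat_r; lra).
    assert (d * (A1 + A2) <= d * (2 * L)) by (apply Rmult_le_compat_l; lra).
    nra.
Qed.

Lemma Qp_lipschitz (z1 w1 z2 w2 : E) r K U eta beta :
  0 < r <= 1 -> vnorm z1 <= K -> vnorm z2 <= K -> vnorm w1 <= U -> vnorm w2 <= U ->
  vnorm (vsub z1 z2) <= eta -> vnorm (vsub w1 w2) <= beta ->
  Qp z1 w1 r <= Qp z2 w2 r + (2 * (K + U) * (eta + r * beta) + 2 * K * eta) / r.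
Proof.
  intros Hr Hz1 Hz2 Hw1 Hw2 He Hb.
  assert (HA : forall z w : E, vnorm z <= K -> vnorm w <= U -> vnorm (vadd z (vscal r w)) <= K + U).
  { intros z w Hz Hw. eapply Rle_trans; [apply vnorm_triangle|].
    rewrite vnorm_scal_pos by lra. pose proof (vnorm_ge0 w). nra. }
  assert (Hd : vnorm (vadd z1 (vscal r w1)) <= vnorm (vadd z2 (vscal r w2)) + (eta + r * beta)).
  { replace (vadd z1 (vscal r w1)) with
      (vadd (vadd z2 (vscal r w2)) (vadd (vsub z1 z2) (vscal r (vsub w1 w2)))) by vlin.
    eapply Rle_trans; [apply vnorm_triangle|]. apply Rplus_le_compat_l.
    eapply Rle_trans; [apply vnorm_triangle|]. rewrite vnorm_scal_pos by lra. nra. }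
  assert (Hz : vnorm z2 <= vnorm z1 + eta).
  { replace z2 with (vadd z1 (vopp (vsub z1 z2))) by vlin.
    eapply Rle_trans; [apply vnorm_triangle|]. rewrite vnorm_opp. lra. }
  pose proof (vnorm_ge0 (vsub z1 z2)). pose proof (vnorm_ge0 (vsub w1 w2)).
  assert (H1 := sq_le_shift _ _ (eta + r * beta) (K + U) (vnorm_ge0 _) (vnorm_ge0 _)
                  (HA _ _ Hz1 Hw1) (HA _ _ Hz2 Hw2) ltac:(nra) Hd).
  assert (H2 := sq_le_shift _ _ eta K (vnorm_ge0 _) (vnorm_ge0 _) Hz2 Hz1 ltac:(lra) Hz).
  unfold Qp. rewrite !hq0. unfold hq.
  apply (Rmult_le_reg_r r); [lra|].
  replace ((vnorm (vadd z1 (vscal r w1)) ^ 2 - vnorm z1 ^ 2) / r * r)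
    with (vnorm (vadd z1 (vscal r w1)) ^ 2 - vnorm z1 ^ 2) by (field; lra).
  replace (((vnorm (vadd z2 (vscal r w2)) ^ 2 - vnorm z2 ^ 2) / r +
     (2 * (K + U) * (eta + r * beta) + 2 * K * eta) / r) * r)
    with (vnorm (vadd z2 (vscal r w2)) ^ 2 - vnorm z2 ^ 2 +
     (2 * (K + U) * (eta + r * beta) + 2 * K * eta)) by (field; lra).
  lra.
Qed.

End Quotients.

(** * Uniform smoothness: left and right quotients agree up to o(r) *)

Section Smoothness.
Context {E : NormedSpace}.
Hypothesis Hus : uniformly_smooth E.

(* the modulus-of-smoothness bound, rescaled to arbitrary z, w *)
Lemma smooth_sum_bound eps : 0 < eps -> exists d, 0 < d /\
  forall (z w : E) r, 0 < r -> r * vnorm w < d * vnorm z ->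
    vnorm (vadd z (vscal r w)) + vnorm (vadd z (vscal (- r) w))
      <= 2 * vnorm z + 2 * eps * r * vnorm w.
Proof.
  intros He. destruct (Hus eps He) as [d [Hd Hsm]]. exists d. split; [exact Hd|].
  intros z w r Hr Hrw.
  destruct (Req_dec (vnorm w) 0) as [Hm|Hm].
  { rewrite Hm. apply vnorm_eq0 in Hm. rewrite Hm, !vscal_zero, vadd_zero. lra. }
  set (c := vnorm z). set (m := vnorm w).
  assert (Hmp : 0 < m) by (destruct (Rle_lt_or_eq_dec 0 m (vnorm_ge0 w)); [lra | exfalso; apply Hm; symmetry; assumption]).
  assert (Hcp : 0 < c).
  { assert (0 <= r * m) by (apply Rmult_le_pos; lra).
    destruct (Rle_lt_dec c 0); [|lra]. assert (d * c <= 0) by nra. unfold c, m in *; lra. }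
  set (tau := r * m / c).
  assert (Htau : 0 < tau < d).
  { unfold tau. split; [apply Rdiv_lt_0_compat; [apply Rmult_lt_0_compat|]; lra|].
    apply (Rmult_lt_reg_r c); auto. replace (r * m / c * c) with (r * m) by (field; lra). unfold c, m; lra. }
  assert (Hunit : forall (u : E) k, 0 < k -> vnorm u = k -> vnorm (vscal (1 / k) u) = 1).
  { intros u k Hk Hu. rewrite vnorm_scal_pos, Hu by (apply div_nonneg; lra). field; lra. }
  pose proof (Hsm tau Htau _ _ (Hunit z c Hcp eq_refl) (Hunit w m Hmp eq_refl)) as Hs.
  assert (Hplus : vnorm (vadd z (vscal r w)) =
                  c * vnorm (vadd (vscal (1 / c) z) (vscal tau (vscal (1 / m) w)))).
  { rewrite <- vnorm_scal_pos by lra. f_equal. unfold tau. vlin; field; lra. }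
  assert (Hminus : vnorm (vadd z (vscal (- r) w)) =
                  c * vnorm (vsub (vscal (1 / c) z) (vscal tau (vscal (1 / m) w)))).
  { rewrite <- vnorm_scal_pos by lra. f_equal. unfold tau. vlin; field; lra. }
  rewrite Hplus, Hminus.
  replace (2 * c + 2 * eps * r * m) with (c * (2 + 2 * eps * tau)) by (unfold tau; field; lra).
  rewrite <- Rmult_plus_distr_l. apply Rmult_le_compat_l; lra.
Qed.

(* the cross term of the second difference: with c = ||z||, m = ||w||,
   2c(||z + r w|| + ||z - r w|| - 2c) <= 4 eps r c m + 4 (r m)^2 / d;
   smoothness is used when r m < d c, the triangle inequality otherwise *)
Lemma smooth_cross_bound eps : 0 < eps -> exists d, 0 < d /\
  forall (z w : E) r, 0 < r ->
    2 * vnorm z * (vnorm (vadd z (vscal r w)) + vnorm (vadd z (vscal (- r) w)) - 2 * vnorm z)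
      <= 4 * eps * r * (vnorm z * vnorm w) + 4 * (r * vnorm w) ^ 2 / d.
Proof.
  intros He. destruct (smooth_sum_bound eps He) as [d [Hd Hsm]]. exists d. split; [exact Hd|].
  intros z w r Hr.
  assert (Htri : forall s, vnorm (vadd z (vscal s w)) <= vnorm z + Rabs s * vnorm w)
    by (intro s; rewrite <- vnorm_scal; apply vnorm_triangle).
  pose proof (Htri r) as HA. pose proof (Htri (- r)) as HB.
  rewrite Rabs_Ropp in HB. rewrite Rabs_pos_eq in HA, HB by lra.
  pose proof (vnorm_ge0 z). pose proof (vnorm_ge0 w).
  set (c := vnorm z) in *. set (m := vnorm w) in *.
  assert (H4 : 0 <= 4 * (r * m) ^ 2 / d) by (apply div_nonneg; nra).
  assert (0 <= 4 * eps * r * (c * m)) by (apply Rmult_le_pos; nra).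
  destruct (Rle_lt_dec (d * c) (r * m)) as [Hsmall|Hlarge].
  - assert (Hc : c <= r * m / d).
    { apply (Rmult_le_reg_l d); [lra|].
      replace (d * (r * m / d)) with (r * m) by (field; lra). lra. }
    replace (4 * (r * m) ^ 2 / d) with (4 * (r * m / d) * (r * m)) by (field; lra).
    assert (4 * c * (r * m) <= 4 * (r * m / d) * (r * m))
      by (apply Rmult_le_compat_r; [apply Rmult_le_pos|]; lra).
    nra.
  - assert (HAB : vnorm (vadd z (vscal r w)) + vnorm (vadd z (vscal (- r) w))
                  <= 2 * c + 2 * eps * r * m)
      by (apply Hsm; [lra | unfold c, m in Hlarge; lra]).
    nra.
Qed.

Lemma smooth_second_difference K W eps :
  0 < K -> 0 < W -> 0 < eps -> exists r0, 0 < r0 /\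
  forall r (z w : E), 0 < r <= r0 -> vnorm z <= K -> vnorm w <= W ->
    hq z w r + hq z w (- r) - 2 * vnorm z ^ 2 <= eps * r.
Proof.
  intros HK HW He.
  set (eps' := eps / (8 * K * W)).
  destruct (smooth_cross_bound eps') as [d [Hd Hcross]]; [unfold eps'; apply Rdiv_lt_0_compat; nra|].
  set (C := 2 * W ^ 2 + 4 * W ^ 2 / d).
  assert (HC : 0 < C) by (assert (0 <= 4 * W ^ 2 / d) by (apply div_nonneg; nra); unfold C; nra).
  exists (eps / (2 * C)). split; [apply Rdiv_lt_0_compat; lra|].
  intros r z w Hr Hz Hw.
  assert (HrC : r * C <= eps / 2).
  { assert (Hr2 : r * C <= eps / (2 * C) * C) by (apply Rmult_le_compat_r; lra).
    replace (eps / (2 * C) * C) with (eps / 2) in Hr2 by (field; lra). exact Hr2. }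
  pose proof (Hcross z w r ltac:(lra)) as Hfirst. unfold hq.
  set (c := vnorm z) in *. set (m := vnorm w) in *.
  set (A := vnorm (vadd z (vscal r w))) in *. set (B := vnorm (vadd z (vscal (- r) w))) in *.
  assert (Hc0 : 0 <= c) by apply vnorm_ge0. assert (Hm0 : 0 <= m) by apply vnorm_ge0.
  assert (HA : Rabs (A - c) <= r * m).
  { unfold A, c, m. rewrite <- (vnorm_scal_pos r w) by lra. apply vnorm_add_dev. }
  assert (HB : Rabs (B - c) <= r * m).
  { unfold B, c, m. replace (r * vnorm w) with (vnorm (vscal (- r) w))
      by (rewrite vnorm_scal, Rabs_Ropp, Rabs_pos_eq; lra).
    apply vnorm_add_dev. }
  assert (HA2 : (A - c) ^ 2 <= (r * m) ^ 2) by (apply pow_maj_Rabs; auto).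
  assert (HB2 : (B - c) ^ 2 <= (r * m) ^ 2) by (apply pow_maj_Rabs; auto).
  (* A^2 + B^2 - 2c^2 = 2c(A + B - 2c) + (A - c)^2 + (B - c)^2 *)
  assert (Hsmall_eps : 4 * eps' * r * (c * m) <= eps * r / 2).
  { assert (Hcm : c * m <= K * W) by (apply Rmult_le_compat; lra).
    replace (4 * eps' * r * (c * m)) with ((eps * r / 2) * (c * m / (K * W)))
      by (unfold eps'; field; nra).
    assert (c * m / (K * W) <= 1) by (apply div_le_of_le_mul; nra).
    assert (0 <= eps * r / 2) by nra.
    assert (eps * r / 2 * (c * m / (K * W)) <= eps * r / 2 * 1)
      by (apply Rmult_le_compat_l; lra).
    lra. }
  assert (Hrest : 2 * (r * m) ^ 2 + 4 * (r * m) ^ 2 / d <= r * (r * C)).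
  { unfold C. assert (m ^ 2 <= W ^ 2) by nra.
    replace (2 * (r * m) ^ 2 + 4 * (r * m) ^ 2 / d)
      with (r * r * (2 * m ^ 2 + 4 * m ^ 2 / d)) by (field; lra).
    replace (r * (r * (2 * W ^ 2 + 4 * W ^ 2 / d)))
      with (r * r * (2 * W ^ 2 + 4 * W ^ 2 / d)) by ring.
    apply Rmult_le_compat_l; [nra|].
    assert (4 * m ^ 2 / d <= 4 * W ^ 2 / d)
      by (unfold Rdiv; apply Rmult_le_compat_r; [left; apply Rinv_0_lt_compat|]; lra).
    lra. }
  assert (r * (r * C) <= r * (eps / 2)) by (apply Rmult_le_compat_l; lra).
  nra.
Qed.

End Smoothness.

(** * Xu's lemma on recursive real inequalities *)

Fixpoint partial_sum (a : nat -> R) (n : nat) : R :=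
  match n with O => 0 | S n => partial_sum a n + a n end.

Lemma sum_f_R0_partial_sum (a : nat -> R) n : sum_f_R0 a n = partial_sum a (S n).
Proof. induction n; simpl in *; [ring | now rewrite IHn]. Qed.

Lemma partial_sum_shift (a : nat -> R) N m :
  partial_sum a (N + m) = partial_sum a N + partial_sum (fun k => a (N + k)%nat) m.
Proof.
  induction m; simpl; [rewrite Nat.add_0_r; ring|].
  rewrite Nat.add_succ_r. simpl. rewrite IHm. ring.
Qed.

Lemma partial_sum_scal (a : nat -> R) c m :
  partial_sum (fun k => c * a k) m = c * partial_sum a m.
Proof. induction m; simpl; [ring | rewrite IHm; ring]. Qed.

Lemma partial_sum_mono (a : nat -> R) : (forall n, 0 <= a n) ->
  forall n m, (n <= m)%nat -> partial_sum a n <= partial_sum a m.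
Proof. intros Ha n m H. induction H; [lra|]. simpl. specialize (Ha m). lra. Qed.

Lemma damped_sequence_bound (e b : nat -> R) :
  (forall n, 0 <= b n <= 1) -> (forall n, e (S n) <= (1 - b n) * e n) ->
  forall m, (1 + partial_sum b m) * e m <= Rmax 0 (e O).
Proof.
  intros Hb He. induction m as [|m IH].
  - simpl. pose proof (Rmax_r 0 (e O)). lra.
  - simpl. pose proof (Rmax_l 0 (e O)). pose proof (Hb m) as Hbm.
    assert (HS : 0 <= partial_sum b m)
      by (apply (partial_sum_mono b (fun n => proj1 (Hb n)) 0 m); lia).
    specialize (He m).
    destruct (Rle_lt_dec (e (S m)) 0) as [Hneg|Hpos]; [nra|].
    assert (Hem : 0 < e m) by (destruct (Rle_lt_dec (e m) 0); nra).
    assert ((1 + partial_sum b m + b m) * (1 - b m) <= 1 + partial_sum b m) by nra.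
    assert ((1 + partial_sum b m + b m) * e (S m)
            <= (1 + partial_sum b m + b m) * ((1 - b m) * e m))
      by (apply Rmult_le_compat_l; lra).
    nra.
Qed.

Lemma xu_lemma (d alpha : nat -> R) (c : R) :
  0 < c <= 1 -> (forall n, 0 <= alpha n <= 1) ->
  (forall M, exists N, M < sum_f_R0 alpha N) -> (forall n, 0 <= d n) ->
  (forall eps, 0 < eps -> exists N, forall n, (N <= n)%nat ->
      d (S n) <= (1 - c * alpha n) * d n + alpha n * eps) ->
  forall eps, 0 < eps -> exists N, forall n, (N <= n)%nat -> d n < eps.
Proof.
  intros Hc Ha Hsum Hd Hstep eps He.
  destruct (Hstep (c * eps / 2)) as [N HN]; [apply Rdiv_lt_0_compat; nra|].
  set (b := fun k => c * alpha (N + k)%nat).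
  set (e := fun k => d (N + k)%nat - eps / 2).
  assert (Hb : forall k, 0 <= b k <= 1) by (intro k; pose proof (Ha (N + k)%nat); unfold b; nra).
  assert (Hbound : forall m, (1 + partial_sum b m) * e m <= Rmax 0 (e O)).
  { apply damped_sequence_bound; [exact Hb|]. intro k. unfold e, b.
    replace (N + S k)%nat with (S (N + k)) by lia.
    pose proof (HN (N + k)%nat ltac:(lia)). pose proof (Ha (N + k)%nat). nra. }
  set (Mx := Rmax 0 (e O)).
  assert (HMx : 0 <= Mx) by apply Rmax_l.
  destruct (Hsum ((4 * Mx / (c * eps) + partial_sum alpha N))) as [N' HN'].
  rewrite sum_f_R0_partial_sum in HN'.
  assert (Hbig : 4 * Mx / eps < partial_sum b (S N')).
  { assert (H1 : partial_sum alpha (S N') <= partial_sum alpha (N + S N'))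
      by (apply partial_sum_mono; [intro; apply Ha | lia]).
    rewrite partial_sum_shift in H1. unfold b. rewrite partial_sum_scal.
    assert (H2 : 4 * Mx / (c * eps) < partial_sum (fun k => alpha (N + k)%nat) (S N')) by lra.
    apply (Rmult_lt_compat_l c) in H2; [|lra].
    replace (c * (4 * Mx / (c * eps))) with (4 * Mx / eps) in H2 by (field; lra). exact H2. }
  exists (N + S N')%nat. intros n Hn.
  replace n with (N + (n - N))%nat by lia.
  assert (HSm : partial_sum b (S N') <= partial_sum b (n - N)%nat)
    by (apply partial_sum_mono; [intro; apply Hb | lia]).
  pose proof (Hbound (n - N)%nat) as Hi. fold Mx in Hi.
  set (Sv := partial_sum b (n - N)%nat) in *. set (ev := e (n - N)%nat) in *.
  assert (Hev : ev <= eps / 4).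
  { destruct (Rle_lt_dec ev 0) as [H0|H0]; [lra|].
    assert (Hcs : 4 * Mx < Sv * eps).
    { replace (4 * Mx) with (4 * Mx / eps * eps) by (field; lra).
      apply Rmult_lt_compat_r; lra. }
    nra. }
  unfold ev, e in Hev. lra.
Qed.

(** * Banach's fixed point theorem on a closed subset *)

Fixpoint iterate {E : NormedSpace} (Phi : E -> E) (d0 : E) (n : nat) : E :=
  match n with O => d0 | S n => Phi (iterate Phi d0 n) end.

Lemma small_nonneg_zero (x : R) : 0 <= x -> (forall e, 0 < e -> x < e) -> x = 0.
Proof. intros H0 H. destruct (Req_dec x 0); auto. specialize (H x ltac:(lra)). lra. Qed.

Section Banach.
Context {E : NormedSpace} (HE : vcomplete E) (D : E -> Prop) (HDcl : vclosed_set D).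
Variables (Phi : E -> E) (k : R).
Hypotheses (HPD : maps_into D Phi) (Hk : 0 <= k < 1)
  (HPc : forall x y, D x -> D y -> vdist (Phi x) (Phi y) <= k * vdist x y).

(* the Picard iterates form a Cauchy sequence: d(y_n, y_(n+m)) <= k^n d(y_1, y_0) / (1 - k) *)
Lemma picard_cauchy (d0 : E) : D d0 -> vcauchy (iterate Phi d0).
Proof.
  intro Hd0. set (y := iterate Phi d0).
  assert (HyD : forall n, D (y n)) by (induction n; simpl; [auto | apply HPD; auto]).
  set (B := vdist (y 1%nat) (y 0%nat)).
  assert (HB : 0 <= B) by apply vdist_ge0.
  assert (Hkn : forall n, 0 <= k ^ n) by (intro; apply pow_le; lra).
  assert (Hstep : forall n, vdist (y (S n)) (y n) <= k ^ n * B).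
  { induction n; [rewrite pow_O, Rmult_1_l; apply Rle_refl|].
    change (vdist (Phi (y (S n))) (Phi (y n)) <= k ^ S n * B).
    eapply Rle_trans; [apply HPc; auto|]. simpl. nra. }
  assert (Hfar : forall n m, vdist (y (n + m)%nat) (y n) <= k ^ n * B * (1 - k ^ m) / (1 - k)).
  { intros n m. induction m.
    - rewrite Nat.add_0_r, vdist_refl. simpl. replace (1 - 1) with 0 by ring. unfold Rdiv. lra.
    - eapply Rle_trans; [apply (vdist_tri _ (y (n + m)%nat))|].
      rewrite Nat.add_succ_r. eapply Rle_trans; [apply Rplus_le_compat; [apply Hstep | apply IHm]|].
      rewrite pow_add. right. simpl. field. lra. }
  assert (Hfar2 : forall n m, vdist (y (n + m)%nat) (y n) <= k ^ n * B / (1 - k)).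
  { intros. eapply Rle_trans; [apply Hfar|]. unfold Rdiv. apply Rmult_le_compat_r.
    - left; apply Rinv_0_lt_compat; lra.
    - pose proof (Hkn m). assert (0 <= k ^ n * B) by (apply Rmult_le_pos; auto). nra. }
  intros eps He.
  destruct (pow_lt_1_zero k ltac:(rewrite Rabs_pos_eq; lra) (eps * (1 - k) / (B + 1)))
    as [N HN]; [apply Rdiv_lt_0_compat; nra|].
  exists N.
  assert (Hgen : forall a b, (N <= a)%nat -> (a <= b)%nat -> vdist (y b) (y a) < eps).
  { intros a b Ha Hab. replace b with (a + (b - a))%nat by lia.
    eapply Rle_lt_trans; [apply Hfar2|].
    specialize (HN a Ha). rewrite Rabs_pos_eq in HN by auto.
    apply (Rmult_lt_reg_r (1 - k)); [lra|].
    replace (k ^ a * B / (1 - k) * (1 - k)) with (k ^ a * B) by (field; lra).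
    assert (k ^ a * (B + 1) < eps * (1 - k) / (B + 1) * (B + 1))
      by (apply Rmult_lt_compat_r; lra).
    replace (eps * (1 - k) / (B + 1) * (B + 1)) with (eps * (1 - k)) in H by (field; lra).
    nra. }
  intros m n Hm Hn. destruct (Nat.le_ge_cases m n).
  - rewrite vdist_sym. apply Hgen; auto.
  - apply Hgen; auto.
Qed.

(* the limit of the Picard iterates lies in D and is fixed by Phi *)
Lemma banach_fixed_point (d0 : E) : D d0 -> exists y, D y /\ Phi y = y.
Proof.
  intro Hd0. set (y := iterate Phi d0).
  assert (HyD : forall n, D (y n)) by (induction n; simpl; [auto | apply HPD; auto]).
  destruct (HE y (picard_cauchy d0 Hd0)) as [ys Hys].
  assert (HysD : D ys) by (apply (HDcl y); auto).
  exists ys. split; auto.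
  apply vdist_eq0, small_nonneg_zero; [apply vdist_ge0|].
  intros e He. destruct (Hys (e / 2) ltac:(lra)) as [N HN].
  eapply Rle_lt_trans; [apply (vdist_tri _ (Phi (y N)))|].
  assert (H1 : vdist (Phi ys) (Phi (y N)) <= k * vdist ys (y N)) by (apply HPc; auto).
  rewrite (vdist_sym ys) in H1.
  pose proof (HN N ltac:(lia)) as H2. pose proof (HN (S N) ltac:(lia)) as H3.
  pose proof (vdist_ge0 (y N) ys).
  assert (k * vdist (y N) ys <= vdist (y N) ys) by nra.
  change (Phi (y N)) with (y (S N)) in *. lra.
Qed.

End Banach.

Lemma average_solve {E : NormedSpace} (X A B N : E) t : t < 1 ->
  X = vadd (vscal t A) (vscal (1 - t) B) ->
  vsub B N = vadd (vsub X N) (vscal (- (t / (1 - t))) (vsub A X)).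
Proof. intros Ht ->. vlin; field; lra. Qed.

Lemma step_coefficients (a al Dsq eps : R) : 0 <= al <= 1 - a -> 0 <= Dsq ->
  (1 - al) ^ 2 * Dsq + al * (2 * a * Dsq + eps) <= (1 - (1 - a) * al) * Dsq + al * eps.
Proof.
  intros Hal HD. assert (0 <= al * (1 - a - al) * Dsq) by (apply Rmult_le_pos; nra). nra.
Qed.

(** * The viscosity net and its limit *)

Section Viscosity.
Context {E : NormedSpace} (D : E -> Prop) (T f : E -> E) (a : R) (p : E).
Hypotheses (HTne : nonexpansive_on D T) (Ha : 0 < a < 1)
  (Hfc : forall x y, D x -> D y -> vdist (f x) (f y) <= a * vdist x y)
  (HpD : D p) (HTp : T p = p).

(* the radius of the ball around the fixed point p that is invariant under
   every averaged map  t f + (1 - t) T *)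
Let Cp := vdist (f p) p.
Let R1 := Cp / (1 - a).

Lemma Cp_R1 : Cp = (1 - a) * R1.
Proof. unfold R1. field. lra. Qed.

Lemma R1_nonneg : 0 <= R1.
Proof. apply div_nonneg; [apply vdist_ge0 | lra]. Qed.

Lemma f_dist y z : D y -> vdist (f y) z <= a * vdist y p + Cp + vdist z p.
Proof.
  intro Hy. pose proof (vdist_tri (f y) (f p) z). pose proof (vdist_tri (f p) p z).
  rewrite (vdist_sym p z) in *. pose proof (Hfc y p Hy HpD). unfold Cp. lra.
Qed.

Lemma T_dist_fixed y : D y -> vdist (T y) p <= vdist y p.
Proof. intro Hy. rewrite <- HTp at 1. apply HTne; auto. Qed.

Lemma averaged_dist_fixed y t : D y -> 0 <= t <= 1 ->
  vdist (vadd (vscal t (f y)) (vscal (1 - t) (T y))) p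
    <= (1 - (1 - a) * t) * vdist y p + (1 - a) * t * R1.
Proof.
  intros Hy Ht. eapply Rle_trans; [apply vdist_convex; exact Ht|].
  pose proof (f_dist y p Hy). pose proof (T_dist_fixed y Hy). rewrite vdist_refl in *.
  rewrite Cp_R1 in *. nra.
Qed.

Lemma averaged_contraction t y1 y2 : 0 <= t <= 1 -> D y1 -> D y2 ->
  vdist (vadd (vscal t (f y1)) (vscal (1 - t) (T y1)))
        (vadd (vscal t (f y2)) (vscal (1 - t) (T y2))) <= (t * a + (1 - t)) * vdist y1 y2.
Proof.
  intros Ht H1 H2. unfold vdist at 1.
  replace (vsub (vadd (vscal t (f y1)) (vscal (1 - t) (T y1)))
                (vadd (vscal t (f y2)) (vscal (1 - t) (T y2))))
    with (vadd (vscal t (vsub (f y1) (f y2))) (vscal (1 - t) (vsub (T y1) (T y2)))) by vlin.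
  eapply Rle_trans; [apply vnorm_triangle|]. rewrite !vnorm_scal_pos by lra.
  pose proof (Hfc y1 y2 H1 H2). pose proof (HTne y1 y2 H1 H2). unfold vdist in *.
  pose proof (vnorm_ge0 (vsub y1 y2)). nra.
Qed.

(* existence of the net x_t, by Banach's fixed point theorem for each t *)
Lemma viscosity_net_exists : vcomplete E -> (exists d, D d) -> vclosed_set D ->
  vconvex_set D -> maps_into D T -> maps_into D f -> exists xt, viscosity_net D T f xt.
Proof.
  intros HE [d0 Hd0] HDcl HDcv HTD HfD.
  assert (Hex : forall t, exists y, 0 < t < 1 ->
            D y /\ y = vadd (vscal t (f y)) (vscal (1 - t) (T y))).
  { intro t. destruct (Rlt_dec 0 t) as [H0|H0]; [destruct (Rlt_dec t 1) as [H1|H1]|];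
      [| exists d0; intros; lra | exists d0; intros; lra].
    set (Phi := fun y => vadd (vscal t (f y)) (vscal (1 - t) (T y))).
    assert (HPD : maps_into D Phi)
      by (intros y Hy; apply HDcv; [apply HfD | apply HTD | lra]; auto).
    assert (HPc : forall y1 y2, D y1 -> D y2 -> vdist (Phi y1) (Phi y2) <= (t * a + (1 - t)) * vdist y1 y2)
      by (intros y1 y2 Hy1 Hy2; apply averaged_contraction; auto; lra).
    destruct (banach_fixed_point HE D HDcl Phi (t * a + (1 - t)) HPD ltac:(split; nra) HPc d0 Hd0)
      as [y [HyD Hy]].
    exists y. intros _. auto. }
  exists (fun t => proj1_sig (constructive_indefinite_description _ (Hex t))).
  intros t Ht. exact (proj2_sig (constructive_indefinite_description _ (Hex t)) Ht).
Qed.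

Section Net.
Variable xt : R -> E.
Hypothesis Hxt : viscosity_net D T f xt.

Lemma net_bounded t : 0 < t < 1 -> vdist (xt t) p <= R1.
Proof.
  intro Ht. destruct (Hxt t Ht) as [HD Heq].
  pose proof (averaged_dist_fixed (xt t) t HD ltac:(lra)) as H. rewrite <- Heq in H.
  apply (Rmult_le_reg_l ((1 - a) * t)); nra.
Qed.

Lemma net_defect t : 0 < t < 1 -> vdist (T (xt t)) (xt t) <= t * (a * R1 + Cp + R1).
Proof.
  intro Ht. destruct (Hxt t Ht) as [HD Heq]. rewrite vdist_sym.
  assert (Hdiff : vsub (xt t) (T (xt t)) = vscal t (vsub (f (xt t)) (T (xt t))))
    by (rewrite Heq at 1; vlin).
  unfold vdist at 1. rewrite Hdiff, vnorm_scal_pos by lra. apply Rmult_le_compat_l; [lra|].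
  change (vdist (f (xt t)) (T (xt t)) <= a * R1 + Cp + R1).
  pose proof (f_dist (xt t) (T (xt t)) HD). pose proof (T_dist_fixed (xt t) HD).
  pose proof (net_bounded t Ht).
  assert (a * vdist (xt t) p <= a * R1) by (apply Rmult_le_compat_l; lra). lra.
Qed.

(* variational inequality of the net, tested at a point y:  since
   x_t - s (f x_t - x_t) = T x_t  for s = t/(1-t), the left quotient of
   ||x_t - y + . (f x_t - x_t)||^2 at s is controlled by ||T y - y||, so the
   quotient at y - x_t is bounded by a second difference plus O(||T y - y||/s) *)
Lemma net_variational y t r : D y -> 0 < t < 1 -> 0 < r ->
  let z := vsub (xt t) y in let u := vsub (f (xt t)) (xt t) in
  let g := vdist (T y) y in
  Qp (vsub y (xt t)) u r <=
    (hq z u r + hq z u (- r) - 2 * vnorm z ^ 2) / r + (2 * vnorm z * g + g ^ 2) / (t / (1 - t)).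
Proof.
  intros Hy Ht Hr z u g. destruct (Hxt t Ht) as [HD Heq].
  set (s := t / (1 - t)).
  assert (Hs : 0 < s) by (unfold s; apply Rdiv_lt_0_compat; lra).
  assert (HTxt : vadd z (vscal (- s) u) = vsub (T (xt t)) y)
    by (unfold z, u, s; symmetry; apply average_solve; [lra | exact Heq]).
  assert (Hshift : vnorm (vadd z (vscal (- s) u)) <= vnorm z + g).
  { rewrite HTxt. change (vdist (T (xt t)) y <= vdist (xt t) y + g).
    pose proof (vdist_tri (T (xt t)) (T y) y). pose proof (HTne _ _ HD Hy). unfold g. lra. }
  assert (Hleft : - ((2 * vnorm z * g + g ^ 2) / s) <= Qp z u r).
  { eapply Rle_trans; [|apply (left_quotient_le z u s r Hs Hr)].
    assert (hq z u (- s) <= (vnorm z + g) ^ 2)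
      by (apply pow_incr; split; [apply vnorm_ge0 | exact Hshift]).
    replace (- ((2 * vnorm z * g + g ^ 2) / s)) with ((vnorm z ^ 2 - (vnorm z + g) ^ 2) / s)
      by (field; lra).
    unfold Rdiv. apply Rmult_le_compat_r; [left; apply Rinv_0_lt_compat|]; lra. }
  replace (vsub y (xt t)) with (vopp z) by (unfold z; vlin).
  rewrite Qp_opp. unfold Qp in Hleft. rewrite hq0 in Hleft.
  replace ((hq z u (- r) - vnorm z ^ 2) / r) with
    ((hq z u r + hq z u (- r) - 2 * vnorm z ^ 2) / r - (hq z u r - vnorm z ^ 2) / r)
    by (field; lra).
  lra.
Qed.

Variable q : E.
Hypotheses (HQ : net_conv_0plus xt q) (HDcl : vclosed_set D).

Lemma net_near_limit e : 0 < e -> exists t, 0 < t < 1 /\ t < e /\ vdist (xt t) q < e.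
Proof.
  intros He. destruct (HQ e He) as [d [Hd Hc]].
  set (t := Rmin (d / 2) (Rmin (1 / 2) (e / 2))).
  assert (Ht : 0 < t) by (unfold t; repeat apply Rmin_pos; lra).
  assert (t <= d / 2) by apply Rmin_l.
  assert (t <= Rmin (1 / 2) (e / 2)) by apply Rmin_r.
  assert (Rmin (1 / 2) (e / 2) <= 1 / 2) by apply Rmin_l.
  assert (Rmin (1 / 2) (e / 2) <= e / 2) by apply Rmin_r.
  exists t. split; [lra|]. split; [lra|]. apply Hc; lra.
Qed.

Lemma limit_bounded : vdist q p <= R1 + 1.
Proof.
  destruct (net_near_limit 1 ltac:(lra)) as [t [Ht [_ Hd]]].
  pose proof (vdist_tri q (xt t) p). rewrite vdist_sym in Hd.
  pose proof (net_bounded t Ht). lra.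
Qed.

(* q is the limit of the net points x_((1/2)^(n+1)) of the closed set D *)
Lemma limit_in_D : D q.
Proof.
  assert (Hhalf : forall n, 0 < (1 / 2) ^ n <= 1) by (induction n; simpl; lra).
  apply (HDcl (fun n => xt ((1 / 2) ^ S n))).
  - intro n. apply Hxt. pose proof (Hhalf n). simpl. lra.
  - intros e He. destruct (HQ e He) as [d [Hd Hc]].
    destruct (pow_lt_1_zero (1 / 2) ltac:(rewrite Rabs_pos_eq; lra) d Hd) as [N HN].
    exists N. intros n Hn. specialize (HN n Hn). pose proof (Hhalf n).
    rewrite Rabs_pos_eq in HN by lra. apply Hc; simpl; lra.
Qed.

(* q is a fixed point of T: ||T q - q|| <= 2 ||x_t - q|| + ||T x_t - x_t||,
   and both terms vanish as t -> 0+ *)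
Lemma limit_fixed : T q = q.
Proof.
  pose proof limit_in_D as HqD.
  set (Cb := a * R1 + Cp + R1).
  assert (HCb : 0 <= Cb)
    by (pose proof R1_nonneg; pose proof (vdist_ge0 (f p) p); unfold Cb, Cp in *; nra).
  apply vdist_eq0, small_nonneg_zero; [apply vdist_ge0|]. intros e He.
  destruct (net_near_limit (e / (2 + Cb))) as [t [Ht [Hte Hd]]]; [apply Rdiv_lt_0_compat; lra|].
  destruct (Hxt t Ht) as [HtD _].
  assert (Hdefect : vdist (T (xt t)) (xt t) <= t * Cb) by apply (net_defect t Ht).
  assert (HTclose : vdist (T q) (T (xt t)) <= vdist (xt t) q)
    by (rewrite (vdist_sym (xt t)); apply HTne; auto).
  pose proof (vdist_tri (T q) (T (xt t)) q). pose proof (vdist_tri (T (xt t)) (xt t) q).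
  assert (t * Cb <= e / (2 + Cb) * Cb) by (apply Rmult_le_compat_r; lra).
  assert (e / (2 + Cb) * (2 + Cb) = e) by (field; lra).
  lra.
Qed.

Section Iterates.
Hypotheses (HDcv : vconvex_set D) (HTD : maps_into D T) (HfD : maps_into D f).
Variables (alpha : nat -> R) (x : nat -> E).
Hypotheses (Ha01 : forall n, 0 <= alpha n <= 1) (Ha0 : Un_cv alpha 0)
  (Hx0 : D (x O))
  (Hrec : forall n, x (S n) = vadd (vscal (alpha n) (f (x n))) (vscal (1 - alpha n) (T (x n))))
  (HTx : Un_cv (fun n => vdist (T (x n)) (x n)) 0).

Lemma iterates_in_D n : D (x n).
Proof.
  induction n; auto. rewrite Hrec. apply HDcv; [apply HfD | apply HTD | apply Ha01]; auto.
Qed.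

Let R2 := Rmax (vdist (x O) p) R1.

Lemma R1_le_R2 : R1 <= R2.
Proof. apply Rmax_r. Qed.

Lemma iterates_bounded n : vdist (x n) p <= R2.
Proof.
  induction n as [|n IH]; [apply Rmax_l|].
  pose proof R1_le_R2. pose proof (Ha01 n).
  rewrite Hrec. eapply Rle_trans; [apply averaged_dist_fixed; [apply iterates_in_D | apply Ha01]|].
  set (b := (1 - a) * alpha n).
  assert (0 <= b <= 1) by (unfold b; nra).
  assert ((1 - b) * vdist (x n) p <= (1 - b) * R2) by (apply Rmult_le_compat_l; lra).
  assert (b * R1 <= b * R2) by (apply Rmult_le_compat_l; lra).
  lra.
Qed.

Let Kc := R1 + R2 + 1.
Let U := (a + 1) * (R1 + 1) + Cp.

Lemma Kc_pos : 0 < Kc.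
Proof. pose proof R1_nonneg. pose proof R1_le_R2. unfold Kc. lra. Qed.

Lemma U_pos : 0 < U.
Proof. pose proof R1_nonneg. pose proof (vdist_ge0 (f p) p). unfold U, Cp in *. nra. Qed.

Lemma iterates_near_limit n : vdist (x n) q <= Kc.
Proof.
  pose proof (vdist_tri (x n) p q). pose proof (iterates_bounded n).
  pose proof limit_bounded. rewrite (vdist_sym p q) in *. unfold Kc. lra.
Qed.

Lemma iterates_near_net n t : 0 < t < 1 -> vdist (xt t) (x n) <= Kc.
Proof.
  intro Ht. pose proof (vdist_tri (xt t) p (x n)). pose proof (iterates_bounded n).
  pose proof (net_bounded t Ht). rewrite (vdist_sym p (x n)) in *. unfold Kc. lra.
Qed.

Lemma f_displacement y : D y -> vdist y p <= R1 + 1 -> vdist (f y) y <= U.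
Proof.
  intros Hy Hyp. pose proof (f_dist y y Hy).
  assert (a * vdist y p <= a * (R1 + 1)) by (apply Rmult_le_compat_l; lra).
  unfold U. lra.
Qed.

Lemma increments_vanish gam : 0 < gam ->
  exists N, forall n, (N <= n)%nat -> vdist (x (S n)) (x n) < gam.
Proof.
  intro Hgam. set (Cf := a * R2 + Cp + R2).
  assert (HCf : 0 <= Cf).
  { pose proof R1_nonneg. pose proof R1_le_R2. pose proof (vdist_ge0 (f p) p).
    unfold Cf, Cp in *. nra. }
  destruct (Un_cv_0_lt _ Ha0 (gam / (2 * (Cf + 1)))) as [N1 HN1];
    [apply Rdiv_lt_0_compat; lra|].
  destruct (Un_cv_0_lt _ HTx (gam / 2)) as [N2 HN2]; [lra|].
  exists (N1 + N2)%nat. intros n Hn.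
  specialize (HN1 n ltac:(lia)). specialize (HN2 n ltac:(lia)). cbv beta in HN2.
  pose proof (Ha01 n). pose proof (iterates_in_D n) as HxD.
  assert (Hinc : vsub (x (S n)) (x n) =
    vadd (vscal (alpha n) (vsub (f (x n)) (T (x n)))) (vsub (T (x n)) (x n)))
    by (rewrite Hrec; vlin).
  assert (Hfar : vdist (f (x n)) (T (x n)) <= Cf).
  { pose proof (f_dist (x n) (T (x n)) HxD). pose proof (T_dist_fixed (x n) HxD).
    pose proof (iterates_bounded n).
    assert (a * vdist (x n) p <= a * R2) by (apply Rmult_le_compat_l; lra).
    unfold Cf. lra. }
  unfold vdist at 1. rewrite Hinc.
  eapply Rle_lt_trans; [apply vnorm_triangle|]. rewrite vnorm_scal_pos by lra.
  assert (alpha n * vdist (f (x n)) (T (x n)) <= alpha n * (Cf + 1))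
    by (apply Rmult_le_compat_l; lra).
  assert (alpha n * (Cf + 1) < gam / (2 * (Cf + 1)) * (Cf + 1))
    by (apply Rmult_lt_compat_r; lra).
  replace (gam / (2 * (Cf + 1)) * (Cf + 1)) with (gam / 2) in * by (field; lra).
  unfold vdist in *. lra.
Qed.

Hypothesis Hus : uniformly_smooth E.

Let L := 2 * (Kc + U) * (1 + (a + 1)) + 2 * Kc.

Lemma quotient_near_net n t r eta : 0 < t < 1 -> 0 < r <= 1 -> vdist (xt t) q <= eta ->
  Qp (vsub (x n) q) (vsub (f q) q) r
    <= Qp (vsub (x n) (xt t)) (vsub (f (xt t)) (xt t)) r + eta * L / r.
Proof.
  intros Ht Hr Htq. destruct (Hxt t Ht) as [HtD _]. pose proof limit_in_D as HqD.
  assert (Heta : 0 <= eta) by (pose proof (vdist_ge0 (xt t) q); lra).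
  pose proof Kc_pos. pose proof U_pos.
  eapply Rle_trans;
    [apply (Qp_lipschitz (vsub (x n) q) (vsub (f q) q) (vsub (x n) (xt t))
              (vsub (f (xt t)) (xt t)) r Kc U eta ((a + 1) * eta)); try lra|].
  - apply iterates_near_limit.
  - change (vdist (x n) (xt t) <= Kc). rewrite vdist_sym. apply (iterates_near_net n t Ht).
  - apply f_displacement; [exact HqD | apply limit_bounded].
  - apply f_displacement; [exact HtD|]. pose proof (net_bounded t Ht). lra.
  - replace (vsub (vsub (x n) q) (vsub (x n) (xt t))) with (vsub (xt t) q) by vlin. exact Htq.
  - replace (vsub (vsub (f q) q) (vsub (f (xt t)) (xt t)))
      with (vadd (vsub (f q) (f (xt t))) (vsub (xt t) q)) by vlin.
    eapply Rle_trans; [apply vnorm_triangle|].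
    change (vdist (f q) (f (xt t)) + vdist (xt t) q <= (a + 1) * eta).
    pose proof (Hfc q (xt t) HqD HtD) as Hfq. rewrite (vdist_sym q (xt t)) in Hfq.
    assert (a * vdist (xt t) q <= a * eta) by (apply Rmult_le_compat_l; lra). lra.
  - apply Rplus_le_compat_l. unfold Rdiv. apply Rmult_le_compat_r; [left; apply Rinv_0_lt_compat; lra|].
    assert (r * ((a + 1) * eta) <= (a + 1) * eta)
      by (rewrite <- (Rmult_1_l ((a + 1) * eta)) at 2; apply Rmult_le_compat_r; nra).
    assert (2 * (Kc + U) * (eta + r * ((a + 1) * eta)) <= 2 * (Kc + U) * (eta + (a + 1) * eta))
      by (apply Rmult_le_compat_l; lra).
    unfold L. lra.
Qed.

(* the analogue of  limsup_n <f q - q, J(x_n - q)> <= 0 *)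
Lemma limsup_quotient e : 0 < e -> exists r, 0 < r /\
  exists N, forall n, (N <= n)%nat -> Qp (vsub (x n) q) (vsub (f q) q) r <= e.
Proof.
  intros He. set (e' := e / 4).
  assert (He' : 0 < e') by (unfold e'; lra).
  pose proof Kc_pos as HKc. pose proof U_pos as HU.
  destruct (smooth_second_difference Hus Kc U e' Kc_pos U_pos He') as [r0 [Hr0 Hgap]].
  set (r := Rmin r0 1).
  assert (Hr : 0 < r <= r0 /\ r <= 1)
    by (unfold r; split; [split; [apply Rmin_pos; lra | apply Rmin_l] | apply Rmin_r]).
  assert (HL : 0 < L) by (unfold L; nra).
  set (eta := e' * r / L).
  assert (Heta : 0 < eta) by (unfold eta, e'; apply Rdiv_lt_0_compat; nra).
  destruct (net_near_limit eta Heta) as [t [Ht [_ Htq]]].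
  destruct (Hxt t Ht) as [HtD _].
  set (s := t / (1 - t)).
  assert (Hs : 0 < s) by (unfold s; apply Rdiv_lt_0_compat; lra).
  set (gam := Rmin 1 (s * e' / (2 * Kc + 1))).
  assert (Hgam : 0 < gam) by (unfold gam, e'; apply Rmin_pos; [lra | apply Rdiv_lt_0_compat; nra]).
  destruct (Un_cv_0_lt _ HTx gam Hgam) as [N HN].
  exists r. split; [lra|]. exists N. intros n Hn.
  specialize (HN n Hn). cbv beta in HN. pose proof (iterates_in_D n) as HxD.
  pose proof (net_variational (x n) t r HxD Ht ltac:(lra)) as Hvar. cbv zeta in Hvar.
  set (z := vsub (xt t) (x n)) in Hvar. set (u := vsub (f (xt t)) (xt t)) in Hvar.
  set (g := vdist (T (x n)) (x n)) in Hvar, HN.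
  assert (Hz : vnorm z <= Kc) by apply (iterates_near_net n t Ht).
  assert (Hu : vnorm u <= U).
  { apply f_displacement; [exact HtD|]. pose proof (net_bounded t Ht). lra. }
  assert (Hsmooth : (hq z u r + hq z u (- r) - 2 * vnorm z ^ 2) / r <= e')
    by (apply div_le_of_le_mul; [lra | apply Hgap; lra]).
  assert (Hnearfix : (2 * vnorm z * g + g ^ 2) / s <= e').
  { apply div_le_of_le_mul; [exact Hs|].
    assert (Hg1 : g <= 1) by (assert (gam <= 1) by apply Rmin_l; lra).
    assert (Hg2 : g <= s * e' / (2 * Kc + 1)) by (assert (gam <= s * e' / (2 * Kc + 1)) by apply Rmin_r; lra).
    apply (Rmult_le_compat_r (2 * Kc + 1)) in Hg2; [|lra].
    replace (s * e' / (2 * Kc + 1) * (2 * Kc + 1)) with (e' * s) in Hg2 by (field; lra).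
    assert (0 <= g) by apply vdist_ge0.
    assert (vnorm z * g <= Kc * g) by (apply Rmult_le_compat_r; lra). nra. }
  pose proof (quotient_near_net n t r eta Ht ltac:(lra) ltac:(lra)) as Hnear.
  replace (eta * L / r) with e' in Hnear by (unfold eta; field; lra).
  change (vsub (f (xt t)) (xt t)) with u in Hnear. change (t / (1 - t)) with s in Hvar.
  unfold e' in *. lra.
Qed.

(* one step of the scheme, estimated with the quotient Q in place of the duality map *)
Lemma iterate_sq_step n r : 0 < r ->
  vdist (x (S n)) q ^ 2 <= (1 - alpha n) ^ 2 * vdist (x n) q ^ 2 + alpha n *
    (Qp (vsub (x (S n)) q) (vsub (f q) q) (2 * r)
     + 2 * a * vdist (x n) q * vdist (x (S n)) q + 2 * r * (a * vdist (x n) q) ^ 2).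
Proof.
  intros Hr. pose proof (Ha01 n) as Han. pose proof (iterates_in_D n) as HxD.
  pose proof limit_in_D as HqD. pose proof limit_fixed as HTq.
  set (al := alpha n) in *. set (Dn := vdist (x n) q).
  set (X := vscal (1 - al) (vsub (T (x n)) q)).
  set (v := vsub (f q) q). set (y := vsub (f (x n)) (f q)).
  assert (HzS : vsub (x (S n)) q = vadd X (vscal al (vadd v y)))
    by (unfold X, v, y, al; rewrite Hrec; vlin).
  assert (HX : vnorm X <= (1 - al) * Dn).
  { unfold X. rewrite vnorm_scal_pos by lra. apply Rmult_le_compat_l; [lra|].
    change (vdist (T (x n)) q <= Dn). rewrite <- HTq at 1. apply HTne; auto. }
  assert (HX2 : vnorm X ^ 2 <= (1 - al) ^ 2 * Dn ^ 2).
  { rewrite <- Rpow_mult_distr. apply pow_incr. split; [apply vnorm_ge0 | exact HX]. }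
  assert (Hy : vnorm y <= a * Dn) by (apply Hfc; auto).
  assert (Hy2 : vnorm y ^ 2 <= (a * Dn) ^ 2) by (apply pow_incr; split; [apply vnorm_ge0 | exact Hy]).
  pose proof (sq_norm_step X (vadd v y) al r ltac:(lra) Hr) as Hst. rewrite <- HzS in Hst.
  pose proof (Qp_add_dir (vsub (x (S n)) q) v y r Hr) as Hadd.
  pose proof (Qp_le_norms (vsub (x (S n)) q) y (2 * r) ltac:(lra)) as Hnorms.
  change (vnorm (vsub (x (S n)) q)) with (vdist (x (S n)) q) in *.
  pose proof (vdist_ge0 (x (S n)) q). pose proof (vnorm_ge0 y).
  assert (vdist (x (S n)) q * vnorm y <= vdist (x (S n)) q * (a * Dn))
    by (apply Rmult_le_compat_l; lra).
  assert (Hbr : Qp (vsub (x (S n)) q) (vadd v y) r <= Qp (vsub (x (S n)) q) v (2 * r)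
     + 2 * a * Dn * vdist (x (S n)) q + 2 * r * (a * Dn) ^ 2) by nra.
  assert (al * Qp (vsub (x (S n)) q) (vadd v y) r <= al * (Qp (vsub (x (S n)) q) v (2 * r)
     + 2 * a * Dn * vdist (x (S n)) q + 2 * r * (a * Dn) ^ 2))
    by (apply Rmult_le_compat_l; lra).
  lra.
Qed.

Lemma eventual_contraction eps : 0 < eps -> exists N, forall n, (N <= n)%nat ->
  vdist (x (S n)) q ^ 2 <= (1 - (1 - a) * alpha n) * vdist (x n) q ^ 2 + alpha n * eps.
Proof.
  intros Heps. pose proof Kc_pos as HKc.
  destruct (limsup_quotient (eps / 3)) as [r1 [Hr1 [N1 HN1]]]; [lra|].
  set (r := Rmin (r1 / 2) (eps / (6 * Kc ^ 2 + 1))).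
  assert (Hr : 0 < r) by (unfold r; apply Rmin_pos; [lra | apply Rdiv_lt_0_compat; nra]).
  assert (Hr1' : 2 * r <= r1) by (assert (r <= r1 / 2) by apply Rmin_l; lra).
  assert (HrK : 2 * r * Kc ^ 2 <= eps / 3).
  { assert (Hrr : r <= eps / (6 * Kc ^ 2 + 1)) by apply Rmin_r.
    apply (Rmult_le_compat_r (6 * Kc ^ 2 + 1)) in Hrr; [|nra].
    replace (eps / (6 * Kc ^ 2 + 1) * (6 * Kc ^ 2 + 1)) with eps in Hrr by (field; nra).
    nra. }
  destruct (increments_vanish (eps / (6 * Kc + 1))) as [N2 HN2];
    [apply Rdiv_lt_0_compat; lra|].
  destruct (Un_cv_0_lt _ Ha0 (1 - a)) as [N3 HN3]; [lra|].
  exists (N1 + N2 + N3)%nat. intros n Hn.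
  specialize (HN1 (S n) ltac:(lia)). specialize (HN2 n ltac:(lia)).
  specialize (HN3 n ltac:(lia)).
  pose proof (iterate_sq_step n r Hr) as Hstep.
  pose proof (Ha01 n) as Han. set (al := alpha n) in *.
  set (Dn := vdist (x n) q) in *. set (en := vdist (x (S n)) (x n)) in *.
  assert (HDn : 0 <= Dn <= Kc) by (split; [apply vdist_ge0 | apply iterates_near_limit]).
  assert (Hen : 0 <= en) by apply vdist_ge0.
  assert (HQr : Qp (vsub (x (S n)) q) (vsub (f q) q) (2 * r) <= eps / 3)
    by (eapply Rle_trans; [apply (Qp_mono _ _ (2 * r) r1); lra | exact HN1]).
  assert (HnS : vdist (x (S n)) q <= Dn + en)
    by (unfold Dn, en; rewrite Rplus_comm; apply vdist_tri).
  assert (Hcross : 2 * a * Dn * vdist (x (S n)) q <= 2 * a * Dn ^ 2 + eps / 3).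
  { assert (en * (6 * Kc + 1) <= eps).
    { apply (Rmult_lt_compat_r (6 * Kc + 1)) in HN2; [|lra].
      replace (eps / (6 * Kc + 1) * (6 * Kc + 1)) with eps in HN2 by (field; lra). lra. }
    assert (2 * a * Dn * vdist (x (S n)) q <= 2 * a * Dn * (Dn + en))
      by (apply Rmult_le_compat_l; nra).
    assert (Dn * en <= Kc * en) by (apply Rmult_le_compat_r; lra).
    nra. }
  assert (Hquad : 2 * r * (a * Dn) ^ 2 <= eps / 3).
  { assert ((a * Dn) ^ 2 <= Kc ^ 2) by (apply pow_incr; nra). nra. }
  assert (al * (Qp (vsub (x (S n)) q) (vsub (f q) q) (2 * r) + 2 * a * Dn * vdist (x (S n)) q
     + 2 * r * (a * Dn) ^ 2) <= al * (2 * a * Dn ^ 2 + eps))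
    by (apply Rmult_le_compat_l; lra).
  pose proof (step_coefficients a al (Dn ^ 2) eps ltac:(lra) (pow2_ge_0 Dn)). lra.
Qed.

Lemma iterates_converge : (forall M, exists N, M < sum_f_R0 alpha N) -> seq_conv x q.
Proof.
  intros Hasum eps Heps.
  destruct (xu_lemma (fun n => vdist (x n) q ^ 2) alpha (1 - a) ltac:(lra) Ha01 Hasum
    ltac:(intro; apply pow2_ge_0) eventual_contraction (eps ^ 2) ltac:(nra)) as [N HN].
  exists N. intros n Hn. specialize (HN n Hn). cbv beta in HN.
  pose proof (vdist_ge0 (x n) q).
  destruct (Rlt_le_dec (vdist (x n) q) eps) as [Hl|Hl]; auto.
  assert (eps ^ 2 <= vdist (x n) q ^ 2) by (apply pow_incr; lra). lra.
Qed.

End Iterates.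
End Net.
End Viscosity.

Theorem theorem3p1 (E : NormedSpace) (HE : vcomplete E) (Hus : uniformly_smooth E)
  (D : E -> Prop) (HDne : exists d, D d) (HDcl : vclosed_set D) (HDcv : vconvex_set D)
  (T : E -> E) (HTD : maps_into D T) (HTne : nonexpansive_on D T)
  (HFT : exists p, fixed_point_set D T p)
  (f : E -> E) (Hf : contraction_on D f)
  (alpha : nat -> R) (Ha01 : forall n, 0 <= alpha n <= 1)
  (Ha0 : Un_cv alpha 0)
  (Hasum : forall M, exists N, M < sum_f_R0 alpha N)
  (x : nat -> E) (Hx0 : D (x O))
  (Hrec : forall n, x (S n) = vadd (vscal (alpha n) (f (x n)))
                                   (vscal (1 - alpha n) (T (x n))))
  (HTx : Un_cv (fun n => vdist (T (x n)) (x n)) 0)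
  (q : E) (Hq : is_Q D T f q) :
  seq_conv x q.
Proof.
  destruct Hf as [HfD [a [Ha Hfc]]].
  destruct HFT as [p [HpD HTp]].
  (* Q(f) is the limit of a net that actually exists *)
  destruct (viscosity_net_exists D T f a HTne Ha Hfc HE HDne HDcl HDcv HTD HfD) as [xt Hxt].
  exact (iterates_converge D T f a p HTne Ha Hfc HpD HTp xt Hxt q (Hq xt Hxt)
           HDcl HDcv HTD HfD alpha x Ha01 Ha0 Hx0 Hrec HTx Hus Hasum).
Qed.
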